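(* Let $n\ge1$ and let $d$ be an $n$-dimension vector, and let $k_{n,d}(z)\in\mathbb{Z}[z]$ be the polynomial with $k_{n,d}(q)=k(\mathrm{P}_{n,d}(q),\mathrm{GL}_n(q))$ for all prime powers $q$. Then $z-1$ divides $k_{n,d}(z)$ in $\mathbb{Z}[z]$.
   Context: An $n$-dimension vector is a tuple $d=(d_1,\dots,d_t)$ of positive integers with $d_i<d_{i+1}$ and $d_t=n$; $\mathrm{P}_{n,d}(q)$ is the stabilizer in $\mathrm{GL}_n(q)$ of the standard flag $\{0\}\subset\mathbb{F}_q^{d_1}\subset\cdots\subset\mathbb{F}_q^{d_t}=\mathbb{F}_q^n$. $k(P,G)$ denotes the number of orbits of $P$ acting on $G$ by conjugation. *)

From HB Require Import structures.
From mathcomp Require Import all_boot all_order all_algebra all_fingroup all_field.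
Set Implicit Arguments. Unset Strict Implicit. Unset Printing Implicit Defensive.
Import GRing.Theory.
Local Open Scope ring_scope.

Definition dim_vector (n : nat) (d : seq nat) : bool :=
  [&& d != [::], sorted ltn d, all (fun x => 0 < x)%N d & last 0%N d == n].

Definition GLset (F : finFieldType) (n : nat) : {set 'M[F]_n} :=
  [set A : 'M[F]_n | A \in unitmx].

(* The standard flag: F^{d_i} is the row space of pid_mx d_i (spanned by the
   first d_i standard basis row vectors); matrices act on row vectors
   v |-> v *m g (MathComp convention). *)
Definition Pset (F : finFieldType) (n : nat) (d : seq nat) : {set 'M[F]_n} :=
  [set g in GLset F n | all (fun di => (pid_mx di *m g == pid_mx di :> 'M[F]_n)%MS) d].

Definition conjmx (F : finFieldType) (n : nat) (A g : 'M[F]_n) : 'M[F]_n :=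
  invmx g *m A *m g.

Definition conj_orbit (F : finFieldType) (n : nat) (P : {set 'M[F]_n}) (A : 'M[F]_n)
  : {set 'M[F]_n} := [set conjmx A g | g in P].

Definition kPG (F : finFieldType) (n : nat) (P G : {set 'M[F]_n}) : nat :=
  #|[set conj_orbit P A | A in G]|.

Definition k_nd (F : finFieldType) (n : nat) (d : seq nat) : nat :=
  kPG (Pset F n d) (GLset F n).

From Pilot Require Import Defs.
From HB Require Import structures.
From mathcomp Require Import all_boot all_order all_algebra all_fingroup all_solvable all_field.
Set Implicit Arguments. Unset Strict Implicit. Unset Printing Implicit Defensive.
Import GRing.Theory FinRing.Theory.
Local Open Scope ring_scope.

(* Multiplication by nonzero scalars permutes the P-conjugacy
   orbits of GL_n(q).  If l is a prime with n < l and l | q - 1, a scalar u of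
   order l fixes no orbit, since u A conjugate to A gives u^n = 1 by taking
   determinants; hence l divides k(P, GL_n(q)).  As k(q) = k(1) mod (q - 1),
   l divides k(1), and the fields of order 2^(l-1) (Fermat) provide such
   situations for arbitrarily large primes l, so k(1) = 0. *)

Section ScalarAction.

Variables (F : finFieldType) (n : nat).
Implicit Types (A g : 'M[F]_n) (S : {set 'M[F]_n}).

Definition scale_mxset S (u : {unit F}) : {set 'M[F]_n} := [set val u *: A | A in S].

Lemma scale_mxset1 : scale_mxset^~ 1%g =1 id.
Proof.
by move=> S; rewrite /scale_mxset -[RHS]imset_id; apply: eq_imset => A; rewrite scale1r.
Qed.

Lemma scale_mxsetM S : act_morph scale_mxset S.
Proof.
by move=> u v; rewrite /scale_mxset -imset_comp; apply: eq_imset => A /=; rewrite scalerA mulrC.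
Qed.

Definition scale_mxset_action := TotalAction scale_mxset1 scale_mxsetM.

Lemma conjmxZ (c : F) A g : Defs.conjmx (c *: A) g = c *: Defs.conjmx A g.
Proof. by rewrite /Defs.conjmx -scalemxAr -scalemxAl. Qed.

Lemma scale_conj_orbit (P : {set 'M[F]_n}) A u :
  scale_mxset (conj_orbit P A) u = conj_orbit P (val u *: A).
Proof.
by rewrite /scale_mxset /conj_orbit -imset_comp; apply: eq_imset => g /=; rewrite conjmxZ.
Qed.

Lemma exp1_of_scale_mem_conj_orbit (P : {set 'M[F]_n}) A (c : F) :
  P \subset GLset F n -> A \in unitmx -> c *: A \in conj_orbit P A -> c ^+ n = 1.
Proof.
move=> /subsetP sPGL Au /imsetP[g /sPGL]; rewrite inE => gU /(congr1 determinant).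
rewrite detZ /Defs.conjmx !det_mulmx det_inv mulrAC mulVr -?unitmxE // mul1r.
by rewrite -{2}[\det A]mul1r unitmxE in Au *; move/(mulIr Au).
Qed.

End ScalarAction.

Section Parabolic.

Variables (F : finFieldType) (n : nat) (d : seq nat).

Lemma Pset_subGL : Pset F n d \subset GLset F n.
Proof. by apply/subsetP => g; rewrite inE => /andP[]. Qed.

Lemma Pset1 : 1%:M \in Pset F n d.
Proof. by rewrite !inE unitmx1; apply/allP => di _; rewrite mulmx1. Qed.

Lemma conj_orbit_refl (A : 'M[F]_n) : A \in conj_orbit (Pset F n d) A.
Proof. by apply/imsetP; exists 1%:M; rewrite ?Pset1 // /Defs.conjmx invmx1 mul1mx mulmx1. Qed.

Lemma order_dvd_scale_conj_orbit (u : {unit F}) A :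
  A \in GLset F n -> conj_orbit (Pset F n d) (val u *: A) = conj_orbit (Pset F n d) A ->
  (#[u]%g %| n)%N.
Proof.
rewrite inE => Au orbit_eq; rewrite order_dvdn; apply/eqP/val_inj.
rewrite /= val_unitX (exp1_of_scale_mem_conj_orbit Pset_subGL Au) //.
by rewrite -orbit_eq conj_orbit_refl.
Qed.

Lemma prime_dvd_k_nd l :
  prime l -> (0 < n)%N -> (n < l)%N -> (l %| #|F|.-1)%N -> (l %| k_nd F n d)%N.
Proof.
move=> l_pr n_gt0 n_lt_l; rewrite -card_finField_unit => /(Cauchy l_pr)[u _ u_ord].
set X := [set conj_orbit (Pset F n d) A | A in GLset F n].
have u_lgroup : (l.-group <[u]>)%g by rewrite /pgroup -orderE u_ord pnat_id.
have actsX : [acts <[u]>%G, on X | scale_mxset_action F n].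
  apply/subsetP => v _; rewrite !inE; apply/subsetP => O /imsetP[A AGL ->].
  rewrite inE /= scale_conj_orbit imset_f // inE unitmxZ ?(valP v) //.
  by rewrite inE in AGL.
have noFix : 'Fix_(X | scale_mxset_action F n)(<[u]>)%g = set0.
  apply/setP => O; rewrite inE [RHS]inE; apply/negP => /andP[/imsetP[A AGL ->]].
  move/afixP => /(_ u (cycle_id u)); rewrite /= scale_conj_orbit.
  move/(order_dvd_scale_conj_orbit AGL); rewrite u_ord => /(dvdn_leq n_gt0).
  by rewrite leqNgt n_lt_l.
have := pgroup_fix_mod u_lgroup actsX.
by rewrite noFix cards0 mod0n => /eqP; rewrite -/(dvdn l #|X|).
Qed.

End Parabolic.

Lemma dvdz_horner_sub1 (p : {poly int}) (m : int) : (m - 1 %| p.[m] - p.[1])%Z.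
Proof.
have /factor_theorem[r Dp] : root (p - p.[1]%:P) 1.
  by rewrite /root hornerD hornerN hornerC subrr.
have := congr1 (horner^~ m) Dp; rewrite /= hornerD hornerN hornerC => ->.
by rewrite hornerM hornerXsubC dvdz_mull.
Qed.

Lemma dvdz_horner1 (p : {poly int}) (m l : int) :
  (l %| m - 1)%Z -> (l %| p.[m])%Z -> (l %| p.[1])%Z.
Proof.
move=> l_dvd_m1 l_dvd_pm; rewrite -[p.[1]](subKr p.[m]) rpredB //.
exact: dvdz_trans l_dvd_m1 (dvdz_horner_sub1 p m).
Qed.

Lemma prime_dvd_exp2_pred_sub1 l : prime l -> (2 < l)%N -> (l %| 2 ^ l.-1 - 1)%N.
Proof.
move=> l_pr l_gt2; have l_gt0 := prime_gt0 l_pr.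
have := fermat_little 2 l_pr; rewrite -{1}(prednK l_gt0) expnS => /eqP.
rewrite -[X in _ == X %[mod _]](muln1 2) eqn_mod_dvd ?leq_mul2l ?expn_gt0 //.
rewrite -mulnBr Gauss_dvdr // prime_coprime //.
by apply/negP => /dvdn_leq-/(_ isT); rewrite leqNgt l_gt2.
Qed.

Lemma exists_finField_prime_dvd_card_pred l : prime l -> (2 < l)%N ->
  exists F : finFieldType, (l %| #|F|.-1)%N.
Proof.
move=> l_pr l_gt2; have l1_gt0 : (0 < l.-1)%N by rewrite -subn1 subn_gt0 prime_gt1.
have [F _ cardF] := @pPrimePowerField 2 l.-1 isT l1_gt0.
by exists F; rewrite cardF -subn1 prime_dvd_exp2_pred_sub1.
Qed.

Theorem mainTheorem5 (n : nat) (d : seq nat) (kz : {poly int}) :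
  (0 < n)%N -> dim_vector n d ->
  (forall F : finFieldType, kz.[(#|F|%:Z)] = (k_nd F n d)%:Z) ->
  exists r : {poly int}, kz = r * ('X - 1).
Proof.
(* The argument works for the stabilizer of any list of standard subspaces. *)
move=> n_gt0 _ kzE.
suff kz1 : kz.[1] = 0.
  have /factor_theorem[r ->] : root kz 1 by rewrite /root kz1.
  by exists r; rewrite polyC1.
apply/eqP; apply: contraT => kz1_neq0.
have [l] := prime_above (maxn 2 (maxn n `|kz.[1]|%N)).
rewrite !gtn_max => /and3P[l_gt2 n_lt_l kz1_lt_l] l_pr.
have [F l_dvd_q1] := exists_finField_prime_dvd_card_pred l_pr l_gt2.
have : (l%:Z %| kz.[1])%Z.
  apply: (@dvdz_horner1 _ #|F|%:Z).
    by rewrite -[1]/(1%N%:Z) (subzn (ltnW (card_finNzRing_gt1 F))) dvdzE subn1.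
  by rewrite kzE dvdzE prime_dvd_k_nd.
rewrite dvdzE => /dvdn_leq; rewrite absz_gt0 kz1_neq0 => /(_ isT).
by rewrite leqNgt kz1_lt_l.
Qed.
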